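(* If $G$ is a $3$-$\gamma_{\rm tg}$-critical graph, then $G$ has no dominating vertex, and $\gamma_{\rm tg}(G|w)=2$ for every vertex $w$ of $G$.
   Context: A dominating vertex is a vertex adjacent to all other vertices. Total domination game on a graph without isolated vertices: Dominator and Staller alternately choose vertices, each chosen vertex must be adjacent to some vertex not yet totally dominated; the game ends when no legal move exists; Dominator minimizes, Staller maximizes the number of moves; $\gamma_{\rm tg}(G)$ is the number of moves in the Dominator-start game under optimal play. $G|w$ is $G$ with $w$ declared already totally dominated, with $\gamma_{\rm tg}(G|w)$ defined analogously. $G$ is $3$-$\gamma_{\rm tg}$-critical if $\gamma_{\rm tg}(G)=3$ and $\gamma_{\rm tg}(G|v)<3$ for every vertex $v$. *)

From mathcomp Require Import all_boot.
Set Implicit Arguments. Unset Strict Implicit. Unset Printing Implicit Defensive.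

Definition simple_graph (T : finType) (e : rel T) : Prop :=
  symmetric e /\ irreflexive e.

Definition no_isolated (T : finType) (e : rel T) : Prop :=
  forall v : T, exists u : T, e v u.

Definition nbhd (T : finType) (e : rel T) (v : T) : {set T} := [set u | e v u].

Definition dominating_vertex (T : finType) (e : rel T) (v : T) : Prop :=
  forall u : T, u != v -> e v u.

(* In a position where D is the set of already totally dominated vertices,
   a vertex v is a legal move iff it is adjacent to some vertex not in D. *)
Definition legal (T : finType) (e : rel T) (D : {set T}) (v : T) : bool :=
  ~~ (nbhd e v \subset D).

(* Value (number of remaining moves under optimal play) of the total
   domination game from position D, with [dom] = true iff Dominator is to move.
   Each move strictly enlarges D, so fuel #|T| suffices. *)
Fixpoint tdg_value (T : finType) (e : rel T) (fuel : nat) (dom : bool)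
  (D : {set T}) : nat :=
  match fuel with
  | 0 => 0
  | f.+1 =>
    if [exists v, legal e D v] then
      (if dom then
         \big[minn/#|T|.+1]_(v | legal e D v) tdg_value e f false (D :|: nbhd e v)
       else
         \max_(v | legal e D v) tdg_value e f true (D :|: nbhd e v)).+1
    else 0
  end.

Definition gamma_tg (T : finType) (e : rel T) : nat :=
  tdg_value e #|T| true set0.

(* gamma_tg(G|w): Dominator-start game with w declared already totally dominated. *)
Definition gamma_tg_pre (T : finType) (e : rel T) (w : T) : nat :=
  tdg_value e #|T| true [set w].

Definition tg_critical3 (T : finType) (e : rel T) : Prop :=
  gamma_tg e = 3 /\ forall v : T, gamma_tg_pre e v < 3.

From mathcomp Require Import all_boot.

Set Implicit Arguments.
Unset Strict Implicit.
Unset Printing Implicit Defensive.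

(* Dominator answers a dominating vertex v by playing v: every vertex but v is
   then totally dominated, and whatever Staller plays next is a neighbour of v,
   so the game ends after two moves, against gamma_tg(G) = 3.  Given a vertex w,
   the game on G|w cannot end after one move either: if w together with the
   neighbourhood of the first move v covered G, then v (not its own neighbour)
   would be w, and w would be a dominating vertex.  Criticality bounds
   gamma_tg(G|w) by 2 from above. *)

Lemma geq_bigmin_cond (I : finType) (P : pred I) (F : I -> nat) x i0 :
  P i0 -> \big[minn/x]_(i | P i) F i <= F i0.
Proof.
move=> Pi0; have : i0 \in index_enum I by rewrite mem_index_enum.
elim: (index_enum I) => [|i r IHr] //; rewrite big_cons in_cons.
case/orP => [/eqP <- | /IHr le_r]; first by rewrite Pi0 geq_minl.
by case: (P i) => //; exact: leq_trans (geq_minr _ _) le_r.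
Qed.

Section TotalDominationGame.

Variables (T : finType) (e : rel T).

Lemma dominating_vertexE v : dominating_vertex e v <-> v |: nbhd e v = setT.
Proof.
split=> [dom_v | cover_v u neq_uv].
  by apply/setP=> u; rewrite !inE; case: eqVneq => //= /dom_v.
by have := in_setT u; rewrite -cover_v !inE (negbTE neq_uv).
Qed.

Lemma legal_setT v : ~~ legal e setT v.
Proof. by rewrite /legal negbK subsetT. Qed.

Lemma exists_legalE D : symmetric e -> no_isolated e ->
  [exists v, legal e D v] = (D != setT).
Proof.
move=> sym_e noiso; apply/existsP/idP => [[v] | ].
  by apply: contraTneq => ->; exact: legal_setT.
rewrite -subTset => /subsetPn [x _ xND]; have [y e_xy] := noiso x.
by exists y; apply/subsetPn; exists x; rewrite // inE sym_e.
Qed.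

Lemma tdg_value_setT f b : tdg_value e f b setT = 0.
Proof.
case: f => [|f] //=; case: existsP => // -[v].
by have /negbTE -> := legal_setT v.
Qed.

Lemma tdg_value_Dom_le f D v : legal e D v ->
  tdg_value e f.+1 true D <= (tdg_value e f false (D :|: nbhd e v)).+1.
Proof.
move=> leg_v /=; have -> : [exists u, legal e D u] by apply/existsP; exists v.
by rewrite ltnS; exact: geq_bigmin_cond.
Qed.

Lemma tdg_value_leS f b D k :
  (forall v, legal e D v -> tdg_value e f (~~ b) (D :|: nbhd e v) <= k) ->
  tdg_value e f.+1 b D <= k.+1.
Proof.
move=> le_k /=; case: existsP => // -[v leg_v]; rewrite ltnS.
case: b le_k => /= le_k; last by apply/bigmax_leqP => u /le_k.
exact: leq_trans (geq_bigmin_cond _ _ leg_v) (le_k v leg_v).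
Qed.

Lemma tdg_value_gt0 f b D : [exists v, legal e D v] -> 0 < tdg_value e f.+1 b D.
Proof. by move=> /= ->. Qed.

Lemma tdg_value_gt1 f b D : [exists v, legal e D v] ->
  (forall v, legal e D v -> 0 < tdg_value e f (~~ b) (D :|: nbhd e v)) ->
  1 < tdg_value e f.+1 b D.
Proof.
move=> ex_legal gt0 /=; rewrite ex_legal ltnS; have /existsP [v leg_v] := ex_legal.
case: b gt0 => /= gt0; last exact: leq_trans (gt0 v leg_v) (leq_bigmax_cond _ leg_v).
by apply: (big_ind (fun m => 0 < m)) => // m n; rewrite leq_min => -> ->.
Qed.

Lemma gamma_tg_dominating_le2 v : no_isolated e -> dominating_vertex e v ->
  gamma_tg e <= 2.
Proof.
move=> noiso /dominating_vertexE cover_v.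
rewrite /gamma_tg; case: #|T| => [|f] //.
have leg_v : legal e set0 v.
  by have [u e_vu] := noiso v; apply/subsetPn; exists u; rewrite ?inE.
apply: leq_trans (tdg_value_Dom_le _ leg_v) _; rewrite ltnS set0U.
case: f => [|f] //.
apply: tdg_value_leS => u /subsetPn [x nbhd_ux x_notin]; rewrite leqn0.
have x_v : x = v.
  by move: (in_setT x); rewrite -cover_v in_setU1 (negbTE x_notin) orbF => /eqP.
suff -> : nbhd e v :|: nbhd e u = setT by rewrite tdg_value_setT.
by apply/eqP; rewrite eqEsubset subsetT -cover_v setUC setUS // sub1set -x_v.
Qed.

Lemma gamma_tg_pre_gt1 w : simple_graph e -> no_isolated e ->
  ~ (exists v, dominating_vertex e v) -> 1 < gamma_tg_pre e w.
Proof.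
move=> [sym_e irr_e] noiso nodom; have [u e_wu] := noiso w.
have neq_wu : w != u by apply: contraTneq e_wu => ->; rewrite irr_e.
have w_notT : [set w] != setT.
  by apply: contra_neq neq_wu => /setP /(_ u); rewrite !inE eq_sym => /eqP.
have: 1 < #|T| by apply/card_gt1P; exists w, u.
rewrite /gamma_tg_pre; case: #|T| => [|[|f]] // _.
apply: tdg_value_gt1 => [|v _]; first by rewrite exists_legalE.
apply: tdg_value_gt0; rewrite exists_legalE //.
apply/eqP => cover; apply: nodom; exists w; apply/dominating_vertexE.
suff v_w : v = w by move: cover; rewrite v_w.
by move: (in_setT v); rewrite -cover !inE irr_e orbF => /eqP.
Qed.

End TotalDominationGame.

Theorem lemma4p5 (T : finType) (e : rel T) :
  simple_graph e -> no_isolated e -> tg_critical3 e ->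
  (~ exists v : T, dominating_vertex e v) /\
  (forall w : T, gamma_tg_pre e w = 2).
Proof.
move=> simple noiso [gamma3 critical].
have nodom : ~ exists v, dominating_vertex e v.
  by case=> v /(gamma_tg_dominating_le2 noiso); rewrite gamma3.
split=> // w; apply/eqP; rewrite eqn_leq -ltnS critical.
exact: gamma_tg_pre_gt1.
Qed.
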